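(* The type ${\mathbf{R}_\mathbf{E}}$ of Euclidean reals is Cauchy complete: every Cauchy approximation in ${\mathbf{R}_\mathbf{E}}$ has a limit in ${\mathbf{R}_\mathbf{E}}$.
   Context: Work in univalent type theory with propositional truncation, function extensionality and propositional resizing; $\Omega$ is the type of propositions, $\exists$ and $\vee$ are truncated; a subtype of $A$ is a map $A\to\Omega$, identified with $\sum_{a:A}P(a)$. $\mathbf{Q}$ is the rationals, $\mathbf{Q}_+$ the positive rationals. For predicates $L,U:\mathbf{Q}\to\Omega$ and $x=(L,U)$ write $q<x$ for $L(q)$ and $x<r$ for $U(r)$. $x$ is a Dedekind cut if: (inhabited) $\exists q.\,q<x$ and $\exists r.\,x<r$; (rounded) $q<x\Leftrightarrow\exists q'.(q<q')\wedge(q'<x)$ and $x<r\Leftrightarrow\exists r'.(r'<r)\wedge(x<r')$; (transitive) $(q<x)\wedge(x<r)\Rightarrow q<r$; (located) $q<r\Rightarrow(q<x)\vee(x<r)$. ${\mathbf{R}_\mathbf{D}}$ is the type of Dedekind cuts, with $\mathsf{rat}(q)$ the cut with $r<\mathsf{rat}(q)\Leftrightarrow r<q$ and $\mathsf{rat}(q)<r\Leftrightarrow q<r$. Define $q<x+y:=\exists s,t.(q=s+t)\wedge(s<x)\wedge(t<y)$, $x+y<r:=\exists s,t.(r=s+t)\wedge(x<s)\wedge(y<t)$; $q<-x:=x<-q$, $-x<r:=-r<x$; $x-y:=x+(-y)$; $q<|x|:=(q<x)\vee(q<-x)$, $|x|<r:=(x<r)\wedge(-x<r)$; premetric $x\sim_\varepsilon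 y:=|x-y|<\varepsilon$ ($\varepsilon$ in the upper cut of $|x-y|$). For a premetric space $R$ (a type with $\sim:\mathbf{Q}_+\times R\times R\to\Omega$), a Cauchy approximation is $x:\mathbf{Q}_+\to R$ with $\forall\delta,\varepsilon.\,x_\delta\sim_{\delta+\varepsilon}x_\varepsilon$; $u:R$ is a limit of $x$ if $\forall\varepsilon,\theta:\mathbf{Q}_+.\,x_\varepsilon\sim_{\varepsilon+\theta}u$; $R$ is Cauchy complete if every Cauchy approximation has a limit. A subtype $S$ of ${\mathbf{R}_\mathbf{D}}$ carries the restricted premetric (elements are $\varepsilon$-close in $S$ iff they are in ${\mathbf{R}_\mathbf{D}}$). The Euclidean reals ${\mathbf{R}_\mathbf{E}}$ is the smallest subtype of ${\mathbf{R}_\mathbf{D}}$ containing $\mathsf{rat}(q)$ for all $q:\mathbf{Q}$ and Cauchy complete with respect to the restricted premetric; concretely, $u\in{\mathbf{R}_\mathbf{E}}$ iff $u\in S$ for every such subtype $S$. *)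

(* MathComp (rationals = mathcomp `rat`), Prop plays the role of Omega. *)
From mathcomp Require Import all_boot all_order all_algebra.
Set Implicit Arguments. Unset Strict Implicit. Unset Printing Implicit Defensive.
Import Order.TTheory GRing.Theory Num.Theory.
Local Open Scope ring_scope.

(* A pair of predicates x = (L, U) on Q: lower (q < x) and upper (x < r). *)
Record PCut := mkPCut { lower : rat -> Prop; upper : rat -> Prop }.

Definition is_dedekind (x : PCut) : Prop :=
  ((exists q, lower x q) /\ (exists r, upper x r)) /\
  (forall q, lower x q <-> exists q', q < q' /\ lower x q') /\
  (forall r, upper x r <-> exists r', r' < r /\ upper x r') /\
  (forall q r, lower x q -> upper x r -> q < r) /\
  (forall q r, q < r -> lower x q \/ upper x r).

Definition RD := {x : PCut | is_dedekind x}.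
Definition RDcut (x : RD) : PCut := proj1_sig x.

Definition padd (x y : PCut) : PCut :=
  mkPCut (fun q => exists s t, q = s + t /\ lower x s /\ lower y t)
         (fun r => exists s t, r = s + t /\ upper x s /\ upper y t).
Definition popp (x : PCut) : PCut :=
  mkPCut (fun q => upper x (- q)) (fun r => lower x (- r)).
Definition psub (x y : PCut) : PCut := padd x (popp y).
Definition pabs (x : PCut) : PCut :=
  mkPCut (fun q => lower x q \/ lower (popp x) q)
         (fun r => upper x r /\ upper (popp x) r).

Definition Qpos := {q : rat | 0 < q}.
Definition Qval (e : Qpos) : rat := proj1_sig e.
Definition Qpos_add (d e : Qpos) : Qpos :=
  exist _ (Qval d + Qval e) (addr_gt0 (proj2_sig d) (proj2_sig e)).

Definition close (eps : Qpos) (x y : RD) : Prop :=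
  upper (pabs (psub (RDcut x) (RDcut y))) (Qval eps).

Definition ratPC (q : rat) : PCut := mkPCut (fun r => r < q) (fun r => q < r).

Lemma ratPC_dedekind (q : rat) : is_dedekind (ratPC q).
Proof.
rewrite /is_dedekind /=.
split; [split|split; [|split; [|split]]].
- by exists (q - 1); rewrite ltrBlDr ltrDl.
- by exists (q + 1); rewrite ltrDl.
- move=> r; split.
  + by move=> h; exists ((r + q) / 2); have [] := midf_lt h.
  + by case=> r' [h1 h2]; apply: lt_trans h2.
- move=> r; split.
  + by move=> h; exists ((q + r) / 2); have [] := midf_lt h.
  + by case=> r' [h1 h2]; apply: lt_trans h1.
- by move=> a b h1 h2; apply: lt_trans h2.
- move=> a b hab; case: (ltrP a q) => h; [by left|right].
  exact: le_lt_trans hab.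
Qed.

Definition ratD (q : rat) : RD := exist _ (ratPC q) (ratPC_dedekind q).

Definition cauchy_approx (S : RD -> Prop) (x : Qpos -> RD) : Prop :=
  (forall d, S (x d)) /\
  (forall d e, close (Qpos_add d e) (x d) (x e)).

Definition is_limit (x : Qpos -> RD) (u : RD) : Prop :=
  forall e th : Qpos, close (Qpos_add e th) (x e) u.

Definition cauchy_complete (S : RD -> Prop) : Prop :=
  forall x : Qpos -> RD, cauchy_approx S x -> exists u, S u /\ is_limit x u.

Definition RE (u : RD) : Prop :=
  forall S : RD -> Prop,
    (forall q, S (ratD q)) -> cauchy_complete S -> S u.

From mathcomp Require Import all_boot all_order all_algebra.
From mathcomp Require Import lra.
From Stdlib Require Import ProofIrrelevance PropExtensionality FunctionalExtensionality.
Set Implicit Arguments. Unset Strict Implicit. Unset Printing Implicit Defensive.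
Import Order.TTheory GRing.Theory Num.Theory.
Local Open Scope ring_scope.

(* A Cauchy approximation x in R_D has a limit: the cut whose lower set is
   {q | q + e + th < x_e for some e, th > 0} and whose upper set is defined
   symmetrically.  Limits in R_D are unique, because cuts that are
   eps-close for every eps > 0 are equal.  So if every x_e lies in R_E, then
   every Cauchy complete S containing the rationals contains x_e for all e,
   hence some limit of x, which can only be this one: the limit lies in R_E. *)

Definition mkQpos (q : rat) (q_gt0 : 0 < q) : Qpos := exist _ q q_gt0.

Lemma Qval_gt0 (e : Qpos) : 0 < Qval e.
Proof. exact: proj2_sig e. Qed.

Lemma RDcutP (u : RD) : is_dedekind (RDcut u).
Proof. exact: proj2_sig u. Qed.

Section DedekindCut.
Variable X : PCut.
Hypothesis hX : is_dedekind X.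

Lemma lower_lt_upper q r : lower X q -> upper X r -> q < r.
Proof. by case: hX => _ [_ [_ [+ _]]]; apply. Qed.

Lemma cut_located q r : q < r -> lower X q \/ upper X r.
Proof. by case: hX => _ [_ [_ [_ +]]]; apply. Qed.

Lemma lower_rounded q : lower X q -> exists q', q < q' /\ lower X q'.
Proof. by case: hX => _ [+ _] => /(_ q) []. Qed.

Lemma upper_rounded r : upper X r -> exists r', r' < r /\ upper X r'.
Proof. by case: hX => _ [_ [+ _]] => /(_ r) []. Qed.

Lemma lower_le p q : lower X q -> p <= q -> lower X p.
Proof.
move=> Lq; rewrite le_eqVlt => /predU1P [-> //|pq].
by case: hX => _ [/(_ p) [_ +] _]; apply; exists q.
Qed.

Lemma upper_ge r r' : upper X r -> r <= r' -> upper X r'.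
Proof.
move=> Ur; rewrite le_eqVlt => /predU1P [<- //|rr'].
by case: hX => _ [_ [/(_ r') [_ +] _]]; apply; exists r.
Qed.

(* Walk up from a lower bound in steps of th/2; an Archimedean bound on the
   number of steps comes from a fixed upper bound. *)
Lemma cut_bracket th : 0 < th -> exists b, lower X b /\ upper X (b + th).
Proof.
move=> th_gt0; have [[[q0 Lq0] [r0 Ur0]] _] := hX.
have c_gt0 : 0 < th / 2 by lra.
suff bracket n q : lower X q -> r0 - q <= n%:R * (th / 2) ->
    exists b, lower X b /\ upper X (b + th).
  apply: (bracket (Num.bound ((r0 - q0) / (th / 2))) q0 Lq0).
  rewrite -ler_pdivrMr //; apply/ltW/archi_boundP/divr_ge0; last lra.
  by have := lower_lt_upper Lq0 Ur0; lra.
elim: n q => [|n IH] q Lq gap.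
  by have := lower_lt_upper Lq Ur0; rewrite mul0r in gap; lra.
have [Lc|Uth] := @cut_located (q + th / 2) (q + th) ltac:(lra).
  by apply: IH Lc _; rewrite -natr1 mulrDl mul1r in gap; lra.
by exists q.
Qed.

End DedekindCut.

Arguments lower_le {X} hX {p q}.
Arguments upper_ge {X} hX {r r'}.

Definition pclose (eps : rat) (X Y : PCut) : Prop := upper (pabs (psub X Y)) eps.

Lemma pclose_sym eps X Y : pclose eps X Y -> pclose eps Y X.
Proof.
move=> [[s [t [-> [Us Lt]]]] [s' [t' [e' [Ls' Ut']]]]]; split.
  by exists (- t'), (- s'); rewrite /= opprK; split=> //; lra.
by exists (- t), (- s); rewrite /= opprK; split=> //; lra.
Qed.

Section PcloseShift.
Variables (eps : rat) (X Y : PCut).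
Hypotheses (hX : is_dedekind X) (hY : is_dedekind Y).

Lemma pclose_lower {q} : pclose eps X Y -> lower Y q -> lower X (q - eps).
Proof.
move=> [_ [s [t [e [Ls Ut]]]]] Lq.
have := lower_lt_upper hY Lq Ut => ?.
by apply: (lower_le hX Ls); lra.
Qed.

Lemma pclose_upper {r} : pclose eps X Y -> upper Y r -> upper X (r + eps).
Proof.
move=> [[s [t [e [Us Lt]]]] _] Ur.
have := lower_lt_upper hY Lt Ur => ?.
by apply: (upper_ge hX Us); lra.
Qed.

Lemma pclose_intro delta : delta < eps ->
  (forall q, lower Y q -> lower X (q - delta)) ->
  (forall r, upper Y r -> upper X (r + delta)) ->
  pclose eps X Y.
Proof.
move=> delta_lt shiftL shiftU.
have [b [Lb Ub]] := cut_bracket hY (ltac:(lra) : 0 < eps - delta).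
split.
  exists (b + eps), (- b); rewrite /= opprK; split; first lra.
  by split=> //; apply: (upper_ge hX (shiftU _ Ub)); lra.
exists (b - delta), (- (b + (eps - delta))); rewrite /= opprK.
by split; [lra | split=> //; apply: shiftL].
Qed.

End PcloseShift.

Lemma lower_sub_of_shift X Y : is_dedekind Y ->
  (forall q eps, 0 < eps -> lower Y q -> lower X (q - eps)) ->
  forall q, lower Y q -> lower X q.
Proof.
move=> hY shift q /(lower_rounded hY) [q' [qq' Lq']].
by have := shift q' (q' - q) ltac:(lra) Lq'; rewrite opprB addrC subrK.
Qed.

Lemma upper_sub_of_shift X Y : is_dedekind Y ->
  (forall r eps, 0 < eps -> upper Y r -> upper X (r + eps)) ->
  forall r, upper Y r -> upper X r.
Proof.
move=> hY shift r /(upper_rounded hY) [r' [r'r Ur']].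
by have := shift r' (r - r') ltac:(lra) Ur'; rewrite addrC subrK.
Qed.

Lemma RD_ext (u v : RD) :
  (forall q, lower (RDcut u) q <-> lower (RDcut v) q) ->
  (forall r, upper (RDcut u) r <-> upper (RDcut v) r) -> u = v.
Proof.
case: u v => [[Lu Uu] du] [[Lv Uv] dv] /= eqL eqU.
have Lu_Lv : Lu = Lv.
  by apply: functional_extensionality => q; exact/propositional_extensionality.
have Uu_Uv : Uu = Uv.
  by apply: functional_extensionality => r; exact/propositional_extensionality.
by subst; rewrite (proof_irrelevance _ du dv).
Qed.

Section CauchyLimit.
Variable x : Qpos -> RD.
Hypothesis x_cauchy : forall d e, close (Qpos_add d e) (x d) (x e).

Let xc e := RDcut (x e).
Let hxc e : is_dedekind (xc e) := RDcutP (x e).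

Lemma cauchy_lower d e q : lower (xc e) q -> lower (xc d) (q - (Qval d + Qval e)).
Proof. exact: (pclose_lower (hxc d) (hxc e) (x_cauchy d e)). Qed.

Lemma cauchy_upper d e r : upper (xc e) r -> upper (xc d) (r + (Qval d + Qval e)).
Proof. exact: (pclose_upper (hxc d) (hxc e) (x_cauchy d e)). Qed.

Definition cauchy_lim_cut : PCut :=
  mkPCut (fun q => exists e th : Qpos, lower (xc e) (q + Qval e + Qval th))
         (fun r => exists e th : Qpos, upper (xc e) (r - Qval e - Qval th)).

Lemma cauchy_lim_inhabited :
  (exists q, lower cauchy_lim_cut q) /\ (exists r, upper cauchy_lim_cut r).
Proof.
pose one := mkQpos ltr01.
have [[[q Lq] [r Ur]] _] := hxc one.
split; [exists (q - 2) | exists (r + 2)]; exists one, one.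
  by apply: (lower_le (hxc one) Lq) => /=; lra.
by apply: (upper_ge (hxc one) Ur) => /=; lra.
Qed.

Lemma cauchy_lim_lower_rounded q :
  lower cauchy_lim_cut q <-> exists q', q < q' /\ lower cauchy_lim_cut q'.
Proof.
split=> [[e [th L]] | [q' [qq' [e [th L]]]]]; have := Qval_gt0 th => th_gt0.
  exists (q + Qval th / 2); split; first lra.
  exists e, (mkQpos (ltac:(lra) : 0 < Qval th / 2)).
  by apply: (lower_le (hxc e) L) => /=; lra.
exists e, (mkQpos (ltac:(lra) : 0 < Qval th + (q' - q))).
by apply: (lower_le (hxc e) L) => /=; lra.
Qed.

Lemma cauchy_lim_upper_rounded r :
  upper cauchy_lim_cut r <-> exists r', r' < r /\ upper cauchy_lim_cut r'.
Proof.
split=> [[e [th U]] | [r' [r'r [e [th U]]]]]; have := Qval_gt0 th => th_gt0.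
  exists (r - Qval th / 2); split; first lra.
  exists e, (mkQpos (ltac:(lra) : 0 < Qval th / 2)).
  by apply: (upper_ge (hxc e) U) => /=; lra.
exists e, (mkQpos (ltac:(lra) : 0 < Qval th + (r - r'))).
by apply: (upper_ge (hxc e) U) => /=; lra.
Qed.

Lemma cauchy_lim_lower_lt_upper q r :
  lower cauchy_lim_cut q -> upper cauchy_lim_cut r -> q < r.
Proof.
move=> [e [th L]] [d [et U]].
have := lower_lt_upper (hxc d) (cauchy_lower d L) U.
by have := Qval_gt0 th; have := Qval_gt0 et; lra.
Qed.

Lemma cauchy_lim_located q r :
  q < r -> lower cauchy_lim_cut q \/ upper cauchy_lim_cut r.
Proof.
move=> qr; pose d := mkQpos (ltac:(lra) : 0 < (r - q) / 5).
have [L|U] := @cut_located _ (hxc d) (q + Qval d + Qval d) (r - Qval d - Qval d)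
  ltac:(rewrite /=; lra).
- by left; exists d, d.
- by right; exists d, d.
Qed.

Lemma cauchy_lim_dedekind : is_dedekind cauchy_lim_cut.
Proof.
split; first exact: cauchy_lim_inhabited.
split; first exact: cauchy_lim_lower_rounded.
split; first exact: cauchy_lim_upper_rounded.
by split; [exact: cauchy_lim_lower_lt_upper | exact: cauchy_lim_located].
Qed.

Definition cauchy_lim : RD := exist _ cauchy_lim_cut cauchy_lim_dedekind.

Lemma cauchy_limP : is_limit x cauchy_lim.
Proof.
move=> e th; have := Qval_gt0 th => th_gt0.
apply: (pclose_intro (hxc e) cauchy_lim_dedekind (_ : Qval e < Qval e + Qval th)).
- by lra.
- move=> q [d [z L]]; have := Qval_gt0 z => z_gt0.
  by apply: (lower_le (hxc e) (cauchy_lower e L)) => /=; lra.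
- move=> r [d [z U]]; have := Qval_gt0 z => z_gt0.
  by apply: (upper_ge (hxc e) (cauchy_upper e U)) => /=; lra.
Qed.

End CauchyLimit.

(* Both u and v are within 2d of x_d, with d = eps / 4. *)
Lemma limit_shift x u v eps : is_limit x u -> is_limit x v -> 0 < eps ->
  (forall q, lower (RDcut u) q -> lower (RDcut v) (q - eps)) /\
  (forall r, upper (RDcut u) r -> upper (RDcut v) (r + eps)).
Proof.
move=> lim_u lim_v eps_gt0; pose d := mkQpos (ltac:(lra) : 0 < eps / 4).
have hd := RDcutP (x d); have hu := RDcutP u; have hv := RDcutP v.
have close_u : pclose (Qval d + Qval d) (RDcut (x d)) (RDcut u) := lim_u d d.
have close_v : pclose (Qval d + Qval d) (RDcut v) (RDcut (x d)).
  exact: pclose_sym (lim_v d d).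
split=> [q Lq | r Ur].
  have := pclose_lower hv hd close_v (pclose_lower hd hu close_u Lq).
  by move/(lower_le hv); apply => /=; lra.
have := pclose_upper hv hd close_v (pclose_upper hd hu close_u Ur).
by move/(upper_ge hv); apply => /=; lra.
Qed.

Lemma limit_unique x u v : is_limit x u -> is_limit x v -> u = v.
Proof.
move=> lim_u lim_v; apply: RD_ext => [q | r]; split.
- apply: lower_sub_of_shift (RDcutP u) _ q => q' eps eps_gt0.
  exact: (limit_shift lim_u lim_v eps_gt0).1.
- apply: lower_sub_of_shift (RDcutP v) _ q => q' eps eps_gt0.
  exact: (limit_shift lim_v lim_u eps_gt0).1.
- apply: upper_sub_of_shift (RDcutP u) _ r => r' eps eps_gt0.
  exact: (limit_shift lim_u lim_v eps_gt0).2.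
- apply: upper_sub_of_shift (RDcutP v) _ r => r' eps eps_gt0.
  exact: (limit_shift lim_v lim_u eps_gt0).2.
Qed.

Theorem lemma2p27 : cauchy_complete RE.
Proof.
move=> x [xRE x_cauchy].
exists (cauchy_lim x_cauchy); split; last exact: cauchy_limP.
move=> S S_rat S_complete.
have [w [Sw lim_w]] := S_complete x (conj (fun d => xRE d S S_rat S_complete) x_cauchy).
by rewrite (limit_unique (cauchy_limP x_cauchy) lim_w).
Qed.
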